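(* Let $p$ be an odd prime and $\mathbf{s}=(s_1,\dots,s_l)$ a tuple of positive integers with $\mathbf{s}=\overline{\mathbf{s}}$ and $|\mathbf{s}|=s_1+\dots+s_l$ odd. Then $H(\mathbf{s};p-1)\equiv S(\mathbf{s};p-1)\equiv0\pmod p$.
   Context: $\overline{\mathbf{s}}=(s_l,\dots,s_1)$. $H(\mathbf{s};N)=\sum_{1\le k_1<\dots<k_l\le N}k_1^{-s_1}\cdots k_l^{-s_l}$, $S(\mathbf{s};N)=\sum_{1\le k_1\le\dots\le k_l\le N}k_1^{-s_1}\cdots k_l^{-s_l}$. Congruences of rationals with denominators prime to $p$ are in the usual $p$-integral sense. *)

From mathcomp Require Import all_boot all_order all_algebra.
Set Implicit Arguments. Unset Strict Implicit. Unset Printing Implicit Defensive.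
Import Order.TTheory GRing.Theory Num.Theory.
Local Open Scope ring_scope.

Fixpoint Hfrom (s : seq nat) (m N : nat) : rat :=
  match s with
  | [::] => 1
  | a :: s' => \sum_(m.+1 <= k < N.+1) (k%:R ^- a) * Hfrom s' k N
  end.

Fixpoint Sfrom (s : seq nat) (m N : nat) : rat :=
  match s with
  | [::] => 1
  | a :: s' => \sum_(m <= k < N.+1) (k%:R ^- a) * Sfrom s' k N
  end.

Definition H (s : seq nat) (N : nat) : rat := Hfrom s 0 N.
Definition S (s : seq nat) (N : nat) : rat := Sfrom s 1 N.

(* r = 0 (mod p) in the p-integral sense: the reduced fraction r has numerator
   divisible by p (hence denominator prime to p). *)
Definition p_cong0 (p : nat) (r : rat) : Prop := (p%:Z %| numq r)%Z.

From mathcomp Require Import all_boot all_order all_algebra.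
From mathcomp Require Import zify ring.
Set Implicit Arguments. Unset Strict Implicit. Unset Printing Implicit Defensive.
Import Order.TTheory GRing.Theory Num.Theory.
Local Open Scope ring_scope.

(* Modulo p, the involution k |-> p - k maps k^-a to (-1)^a k^-a and reverses
   the order of the summation indices, so H(s;p-1) is congruent to
   (-1)^|s| H(rev s;p-1), and likewise for S.  For a palindromic s of odd weight the sum is thus
   congruent to its own opposite, hence to 0 as p is odd.  To make this
   precise the sums are evaluated in 'F_p: all denominators are prime to p,
   and "r reduces to v" between rationals and residues respects the ring
   operations. *)

Lemma exchange_big_nat_gap (R : nmodType) (d a n : nat) (f : nat -> nat -> R) :
  \sum_(a <= j < n) \sum_(j + d <= k < n) f j k =
  \sum_(a <= k < n) \sum_(a <= j < k.+1 - d) f j k.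
Proof.
transitivity
  (\sum_(a <= j < n) \sum_(a <= k < n) if (j + d <= k)%N then f j k else 0).
  apply: eq_big_nat => j /andP [aj _].
  by rewrite (big_nat_widenl _ a) ?big_mkcond //; lia.
rewrite exchange_big_nat; apply: eq_big_nat => k /andP [_ kn].
rewrite [RHS](big_nat_widen _ _ n) 1?[RHS]big_mkcond; last lia.
by apply: eq_big_nat => j _; congr (if _ then _ else _); lia.
Qed.

Lemma big_nat_reflect (R : nmodType) (p a b : nat) (f : nat -> R) :
  (b <= p)%N ->
  \sum_(a <= k < b) f k = \sum_((p - b).+1 <= j < (p - a).+1) f (p - j)%N.
Proof.
move=> bp; have [ba|ab] := leqP b a; first by rewrite !big_geq //; lia.
rewrite -[a]add0n big_addn -[(p - b).+1]add0n big_addn big_nat_rev.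
have -> : ((p - (0 + a)).+1 - (p - b).+1 = b - a)%N by lia.
by apply: eq_big_nat => i /andP [_ ?]; congr f; lia.
Qed.

Fixpoint mhs {F : fieldType} (d : nat) (s : seq nat) (m n : nat) : F :=
  if s is a :: s' then \sum_(m + d <= k < n) k%:R ^- a * mhs d s' k n else 1.

Lemma Hfrom_mhs s m N : Hfrom s m N = mhs 1 s m N.+1.
Proof.
by elim: s m => //= a s IH m; rewrite addn1; apply: eq_bigr => k _; rewrite IH.
Qed.

Lemma Sfrom_mhs s m N : Sfrom s m N = mhs 0 s m N.+1.
Proof.
by elim: s m => //= a s IH m; rewrite addn0; apply: eq_bigr => k _; rewrite IH.
Qed.

Section Reflection.

Variable F : fieldType.

Lemma mhs_rcons d s a m n :
  mhs d (rcons s a) m n =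
  \sum_(m + d <= k < n) mhs d s m (k.+1 - d) * k%:R ^- a :> F.
Proof.
elim: s m => [|b s IH] m /=; first by apply: eq_bigr => k _; rewrite mul1r mulr1.
under eq_bigr => j _ do rewrite IH big_distrr.
rewrite exchange_big_nat_gap; apply: eq_bigr => k _; rewrite big_distrl /=.
by apply: eq_bigr => j _; rewrite mulrA.
Qed.

Variable p : nat.
Hypothesis p0 : p%:R = 0 :> F.

Lemma exprV_natrB_char (a j : nat) : (j <= p)%N ->
  (p - j)%:R ^- a = (-1) ^+ a * j%:R ^- a :> F.
Proof.
by move=> jp; rewrite natrB // p0 sub0r [in LHS]exprNn invfM invr_sign.
Qed.

Lemma mhs_reflect d s m n :
  (n <= p)%N -> (d <= (p - n).+1)%N -> (m + d <= p)%N ->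
  mhs d s m n =
  (-1) ^+ sumn s * mhs d (rev s) ((p - n).+1 - d) ((p - m).+1 - d) :> F.
Proof.
move=> np dp; elim: s m => [|a s IH] m mdp /=; first by rewrite mulr1.
rewrite (big_nat_reflect _ _ np) rev_cons mhs_rcons big_distrr /=.
have -> : ((p - n).+1 - d + d = (p - n).+1)%N by lia.
have -> : ((p - (m + d)).+1 = (p - m).+1 - d)%N by lia.
apply: eq_big_nat => j /andP [j1 j2].
rewrite exprV_natrB_char ?IH; try lia.
have -> : (p - (p - j) = j)%N by lia.
by rewrite exprD; ring.
Qed.

Lemma mhs_palindrome_odd_eq0 d s m n :
  2%:R != 0 :> F -> rev s = s -> odd (sumn s) ->
  (0 < n <= p)%N -> (m + n + d = p.+1)%N -> mhs d s m n = 0 :> F.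
Proof.
move=> two rs os /andP [n0 np] mnd.
have /eqP := @mhs_reflect d s m n np ltac:(lia) ltac:(lia).
have -> : ((p - n).+1 - d = m)%N by lia.
have -> : ((p - m).+1 - d = n)%N by lia.
rewrite rs -signr_odd os expr1 mulN1r -addr_eq0 -mulr2n -mulr_natl.
by rewrite mulf_eq0 (negbTE two) => /eqP.
Qed.

End Reflection.

Section Reduction.

Variable F : fieldType.

(* For F = 'F_p this says that r is p-integral with residue v. *)
Definition reduces_to (r : rat) (v : F) : Prop :=
  exists x y : int, [/\ x%:~R != 0 :> F, r = y%:~R / x%:~R & v = y%:~R / x%:~R].

Lemma intr_neq0_rat (x : int) : x%:~R != 0 :> F -> x%:~R != 0 :> rat.
Proof. by apply: contra_neq => /eqP; rewrite intr_eq0 => /eqP ->. Qed.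

Lemma reduces_to_int (z : int) : reduces_to z%:~R z%:~R.
Proof. by exists 1, z; rewrite !divr1 oner_neq0. Qed.

Lemma reduces_toD r1 r2 v1 v2 :
  reduces_to r1 v1 -> reduces_to r2 v2 -> reduces_to (r1 + r2) (v1 + v2).
Proof.
move=> [x1 [y1 [x1F -> ->]]] [x2 [y2 [x2F -> ->]]].
have [x1Q x2Q] := (intr_neq0_rat x1F, intr_neq0_rat x2F).
exists (x1 * x2), (y1 * x2 + y2 * x1); rewrite !rmorphM !rmorphD !rmorphM /=.
by split; [rewrite mulf_neq0 | field; apply/andP | field; apply/andP].
Qed.

Lemma reduces_toM r1 r2 v1 v2 :
  reduces_to r1 v1 -> reduces_to r2 v2 -> reduces_to (r1 * r2) (v1 * v2).
Proof.
move=> [x1 [y1 [x1F -> ->]]] [x2 [y2 [x2F -> ->]]].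
exists (x1 * x2), (y1 * y2); rewrite !rmorphM /=.
by split; [rewrite mulf_neq0 | rewrite invfM mulrACA | rewrite invfM mulrACA].
Qed.

Lemma reduces_toV r v : v != 0 -> reduces_to r v -> reduces_to r^-1 v^-1.
Proof.
move=> v0 [x [y [xF -> vE]]]; have yF : y%:~R != 0 :> F.
  by apply: contra_neq v0; rewrite vE => ->; rewrite mul0r.
by exists y, x; rewrite vE !invf_div.
Qed.

Lemma reduces_toX r v n : reduces_to r v -> reduces_to (r ^+ n) (v ^+ n).
Proof.
move=> rv; elim: n => [|n IH]; first exact: (reduces_to_int 1).
by rewrite !exprS; apply: reduces_toM.
Qed.

Lemma reduces_to_sum m n (f : nat -> rat) (g : nat -> F) :
  (forall i, (m <= i < n)%N -> reduces_to (f i) (g i)) ->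
  reduces_to (\sum_(m <= i < n) f i) (\sum_(m <= i < n) g i).
Proof.
move=> fg; rewrite big_nat_cond [X in reduces_to _ X]big_nat_cond.
apply: (big_ind2 reduces_to); first exact: (reduces_to_int 0).
  by move=> r1 v1 r2 v2; apply: reduces_toD.
by move=> i /andP [/fg].
Qed.

Lemma reduces_to_natrV (k a : nat) :
  k%:R != 0 :> F -> reduces_to (k%:R ^- a) (k%:R ^- a).
Proof.
move=> kF; apply: reduces_toV; first exact: expf_neq0.
exact/reduces_toX/(reduces_to_int k).
Qed.

Lemma reduces_to_p_cong0 p r v :
  p \in [pchar F] -> reduces_to r v -> v = 0 -> p_cong0 p r.
Proof.
move=> chF [x [y [xF rE ->]]] /eqP; rewrite mulf_eq0 invr_eq0 (negbTE xF) orbF.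
move=> /eqP y0.
have numE : numq r * x = y * denq r.
  apply: (@intr_inj rat); rewrite !rmorphM /= numqE rE.
  by field; rewrite intr_neq0_rat.
have : (numq r)%:~R * x%:~R = 0 :> F.
  by rewrite -rmorphM /= numE rmorphM /= y0 mul0r.
by move=> /eqP; rewrite mulf_eq0 (negbTE xF) orbF -(dvdz_pcharf chF).
Qed.

Lemma mhs_reduces_to p d s m n :
  p \in [pchar F] -> (n <= p)%N -> (0 < m + d)%N ->
  reduces_to (mhs d s m n) (mhs d s m n).
Proof.
move=> chF np; elim: s m => [|a s IH] m md /=; first exact: (reduces_to_int 1).
apply: reduces_to_sum => k /andP [mk kn].
apply: reduces_toM; last by apply: IH; lia.
by apply: reduces_to_natrV; rewrite -(dvdn_pcharf chF) gtnNdvd //; lia.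
Qed.

End Reduction.

Theorem corollary3p4 (p : nat) (s : seq nat) :
  prime p -> odd p ->
  all (fun a => 0 < a)%N s ->
  rev s = s ->
  odd (sumn s) ->
  p_cong0 p (H s p.-1) /\ p_cong0 p (S s p.-1).
Proof.
move=> p_pr p_odd _ rs os.
have chp := pchar_Fp p_pr.
have p0 : p%:R = 0 :> 'F_p by apply/eqP; rewrite -(dvdn_pcharf chp).
have two : 2%:R != 0 :> 'F_p.
  by rewrite -(dvdn_pcharf chp) dvdn_prime2 //; apply: contraL p_odd => /eqP ->.
have p_gt0 := prime_gt0 p_pr.
rewrite /H /S Hfrom_mhs Sfrom_mhs prednK //.
split; apply: (reduces_to_p_cong0 chp (mhs_reduces_to s chp _ _)) => //;
  by apply: (mhs_palindrome_odd_eq0 p0 two rs os); lia.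
Qed.
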